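(* For each prime number $p$, there exists a self-similar $p$-adic fractal string $\mathcal{L}_p\subseteq\mathbb{Z}_p$ of Minkowski--Bouligand dimension $D=\frac{1}{2}$ and with oscillatory period $\mathbf{p}=\frac{\pi}{\log p}$; that is, the geometric zeta function of $\mathcal{L}_p$ has a meromorphic continuation to all of $\mathbb{C}$ whose set of poles (the complex dimensions of $\mathcal{L}_p$) is exactly $\{\frac12+in\frac{\pi}{\log p} : n\in\mathbb{Z}\}$, and $\frac12$ is the abscissa of convergence of the series defining the geometric zeta function.
   Context: Let $p$ be a prime and $\mathbb{Z}_p$ the ring of $p$-adic integers with the $p$-adic absolute value $|\cdot|_p$ ($|p|_p=p^{-1}$). A $p$-adic fractal string $\mathcal{L}$ in $\mathbb{Z}_p$ is a countable disjoint union of balls of the form $a+p^n\mathbb{Z}_p$ ($a\in\mathbb{Z}_p$, $n\geq 1$) contained in $\mathbb{Z}_p$; the ball $a+p^n\mathbb{Z}_p$ has length $p^{-n}$, and $\mathcal{L}$ is encoded by its sequence of lengths $l_j$ (counted with multiplicity). Its geometric zeta function is $\zeta_{\mathcal{L}}(s)=\sum_j l_j^s$, defined for $\Re(s)$ larger than the abscissa of convergence, and (when possible) meromorphically continued to $\mathbb{C}$. The complex dimensions of $\mathcal{L}$ are the poles of this meromorphic continuation. The Minkowski--Bouligand dimension $D$ of $\mathcal{L}$ is the abscissa of convergence of $\sum_j l_j^s$. $\mathcal{L}$ is said to have oscillatory period $\mathbf{p}>0$ if its set of complex dimensions is exactly $\{D+in\mathbf{p}: n\in\mathbb{Z}\}$.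 $\mathcal{L}$ is self-similar if it is the complement in $\mathbb{Z}_p$ of the unique nonempty compact set $K\subseteq\mathbb{Z}_p$ satisfying $K=\bigcup_{i}\phi_i(K)$ for a finite family of at least two similarity contractions $\phi_i(x)=c_i+p^{m}x$ of $\mathbb{Z}_p$ into itself (with $c_i\in\mathbb{Z}$, $m\ge1$). *)

From Stdlib Require Import Reals ZArith Znumtheory List Lia ClassicalDescription.
From Coquelicot Require Import Coquelicot.
Open Scope R_scope.

(** * p-adic integers
    An element of Z_p is represented by the compatible sequence of its
    residues: x n = (x mod p^n) in [0, p^n), with x (n+1) mod p^n = x n. *)
Definition is_padic (p : Z) (x : nat -> Z) : Prop :=
  forall n : nat,
    (0 <= x n < p ^ Z.of_nat n)%Z /\
    Z.modulo (x (S n)) (p ^ Z.of_nat n) = x n.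

(** The similarity contraction phi(x) = c + p^m x  (c an integer), on residues:
    (c + p^m x) mod p^k = (c + p^m (x mod p^(k-m))) mod p^k. *)
Definition sim_map (p : Z) (m : nat) (c : Z) (x : nat -> Z) : nat -> Z :=
  fun k => Z.modulo (c + p ^ Z.of_nat m * x (k - m)%nat) (p ^ Z.of_nat k).

(** The ball a + p^n Z_p (with 0 <= a < p^n) is {y in Z_p | y n = a};
    it has length p^(-n).  [ball_in p U a n]: this ball is contained in U. *)
Definition ball_in (p : Z) (U : (nat -> Z) -> Prop) (a : Z) (n : nat) : Prop :=
  forall y, is_padic p y -> y n = a -> U y.

(** Maximal balls of level n >= 1 contained in U: the ball a + p^n Z_p is
    contained in U but its parent ball (a mod p^(n-1)) + p^(n-1) Z_p is not. *)
Definition maximal_ball_in (p : Z) (U : (nat -> Z) -> Prop) (a : Z) (n : nat) : Prop :=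
  (1 <= n)%nat /\ (0 <= a < p ^ Z.of_nat n)%Z /\ ball_in p U a n /\
  ~ ball_in p U (Z.modulo a (p ^ Z.of_nat (n - 1))) (n - 1).

Definition count_below (P : nat -> Prop) (bound : nat) : nat :=
  length (filter (fun a => if excluded_middle_informative (P a) then true else false)
                 (seq 0 bound)).

(** The p-adic fractal string given by an open set U of Z_p (its canonical
    decomposition into maximal balls), encoded by the multiplicities of its
    lengths: [string_mult p U n] = number of balls of length p^(-n). *)
Definition string_mult (p : Z) (U : (nat -> Z) -> Prop) (n : nat) : nat :=
  count_below (fun a => maximal_ball_in p U (Z.of_nat a) n) (Z.to_nat (p ^ Z.of_nat n)).

(** Compact subsets of Z_p = closed subsets of Z_p (Z_p is compact Hausdorff);
    closedness: every point of Z_p outside K has a ball around it missing K. *)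
Definition padic_compact (p : Z) (K : (nat -> Z) -> Prop) : Prop :=
  (forall x, K x -> is_padic p x) /\
  (forall x, is_padic p x -> ~ K x ->
     exists n : nat, forall y, is_padic p y -> y n = x n -> ~ K y).

Definition ss_attractor (p : Z) (m : nat) (cs : list Z) (K : (nat -> Z) -> Prop) : Prop :=
  padic_compact p K /\ (exists x, K x) /\
  (forall y, K y <-> exists c, In c cs /\ exists x, K x /\ forall k, y k = sim_map p m c x k).

(** The self-similar string associated to K: the complement of K in Z_p. *)
Definition complement_in_Zp (p : Z) (K : (nat -> Z) -> Prop) : (nat -> Z) -> Prop :=
  fun x => is_padic p x /\ ~ K x.

Definition cpow (x : R) (s : C) : C :=
  (exp (fst s * ln x) * cos (snd s * ln x), exp (fst s * ln x) * sin (snd s * ln x)).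

(** Terms of the geometric zeta function sum_j l_j^s, grouped by length:
    the level-n term is (number of balls of length p^(-n)) * (p^(-n))^s. *)
Definition zeta_term (p : Z) (N : nat -> nat) (s : C) (n : nat) : C :=
  RtoC (INR (N n)) * cpow (/ (IZR p ^ n)) s.

Definition abscissa_of_convergence (p : Z) (N : nat -> nat) (D : R) : Prop :=
  forall sigma : R,
    (D < sigma -> ex_series (fun n => INR (N n) * Rpower (/ (IZR p ^ n)) sigma)) /\
    (sigma < D -> ~ ex_series (fun n => INR (N n) * Rpower (/ (IZR p ^ n)) sigma)).

Definition meromorphic_on_C_with_poles (f : C -> C) (P : C -> Prop) : Prop :=
  (forall z : C, exists r : R, 0 < r /\
     forall w : C, w <> z -> Cmod (w - z) < r -> ~ P w) /\
  (forall z : C, ~ P z -> ex_derive (K := C_AbsRing) (V := C_NormedModule) f z) /\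
  (forall z0 : C, P z0 ->
     filterlim (fun z => Cmod (f z)) (locally' (T := C_UniformSpace) z0)
               (Rbar_locally p_infty)).

Definition complex_dimensions_are (p : Z) (N : nat -> nat) (D : R) (P : C -> Prop) : Prop :=
  exists f : C -> C,
    (forall s : C, D < fst s -> is_series (zeta_term p N s) (f s)) /\
    meromorphic_on_C_with_poles f P.

From Stdlib Require Import Reals ZArith Znumtheory List.
From Coquelicot Require Import Coquelicot.
Open Scope R_scope.
From Stdlib Require Import Arith Lia Lra Psatz Classical ClassicalDescription.

(* Take for K the p-adic integers whose digits of odd index vanish: K is the attractor of the
   p maps x |-> c + p^2 x, 0 <= c < p.  A maximal ball of the complement of K is cut out by an
   admissible prefix of odd length 2k+1 (p^(k+1) choices) followed by a nonzero digit of index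
   2k+1, so there are (p-1) p^(k+1) balls of length p^-(2k+2) and none of odd level.  Hence
   zeta(s) = sum_k (p-1) W^(k+1) = (p-1) W / (1 - W) with W = p^(1-2s): the series converges
   exactly for Re s > 1/2, and the closed form is meromorphic with poles where p^(1-2s) = 1,
   that is at s = 1/2 + i n pi / log p. *)

Section Counting.
Local Open Scope nat_scope.

Lemma count_below_S (P : nat -> Prop) n :
  count_below P (S n) = count_below P n + (if excluded_middle_informative (P n) then 1 else 0).
Proof.
  unfold count_below. rewrite seq_S, filter_app, length_app. simpl.
  destruct (excluded_middle_informative (P n)); reflexivity.
Qed.

Lemma count_below_ext (P Q : nat -> Prop) n :
  (forall a, a < n -> (P a <-> Q a)) -> count_below P n = count_below Q n.
Proof.
  induction n as [|n IH]; intros HPQ; [reflexivity|].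
  rewrite !count_below_S, IH by (intros a Ha; apply HPQ; lia).
  specialize (HPQ n (Nat.lt_succ_diag_r n)).
  destruct (excluded_middle_informative (P n)), (excluded_middle_informative (Q n));
    [reflexivity | tauto | tauto | reflexivity].
Qed.

Lemma count_below_all (P : nat -> Prop) n : (forall a, a < n -> P a) -> count_below P n = n.
Proof.
  induction n as [|n IH]; intros HP; [reflexivity|].
  rewrite count_below_S, IH by (intros a Ha; apply HP; lia).
  destruct (excluded_middle_informative (P n)) as [|HPn]; [lia | exfalso; apply HPn, HP; lia].
Qed.

Lemma count_below_none (P : nat -> Prop) n : (forall a, a < n -> ~ P a) -> count_below P n = 0.
Proof.
  induction n as [|n IH]; intros HP; [reflexivity|].
  rewrite count_below_S, IH by (intros a Ha; apply HP; lia).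
  destruct (excluded_middle_informative (P n)) as [HPn|]; [|reflexivity].
  exfalso. apply (HP n); auto.
Qed.

Lemma count_below_add (P : nat -> Prop) m n :
  count_below P (m + n) = count_below P m + count_below (fun i => P (m + i)) n.
Proof.
  induction n as [|n IH]; [rewrite Nat.add_0_r; unfold count_below; simpl; lia|].
  rewrite Nat.add_succ_r, !count_below_S, IH.
  destruct (excluded_middle_informative (P (m + n))); lia.
Qed.

Lemma count_below_prod (P P1 P2 : nat -> Prop) A B : 0 < A ->
  (forall a, a < A * B -> (P a <-> P1 (a mod A) /\ P2 (a / A))) ->
  count_below P (A * B) = count_below P1 A * count_below P2 B.
Proof.
  intros HA. induction B as [|B IH]; intros HP.
  { rewrite Nat.mul_0_r. unfold count_below. simpl. lia. }
  rewrite Nat.mul_succ_r, count_below_add, IH by (intros a Ha; apply HP; nia).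
  assert (Hblock : forall i, i < A -> (P (A * B + i) <-> P1 i /\ P2 B)).
  { intros i Hi. rewrite HP by nia.
    rewrite (Nat.mul_comm A B), Nat.add_comm, Nat.Div0.mod_add, Nat.div_add by lia.
    rewrite Nat.mod_small, Nat.div_small by exact Hi. reflexivity. }
  rewrite count_below_S.
  destruct (excluded_middle_informative (P2 B)) as [HB|HB].
  - rewrite (count_below_ext (fun i => P (A * B + i)) P1)
      by (intros i Hi; rewrite Hblock by exact Hi; tauto). lia.
  - rewrite (count_below_none (fun i => P (A * B + i)))
      by (intros i Hi; rewrite Hblock by exact Hi; tauto). lia.
Qed.

Lemma count_below_eq_0 n : 0 < n -> count_below (fun q => q = 0) n = 1.
Proof.
  intros Hn. replace n with (1 + (n - 1)) by lia.
  rewrite count_below_add, count_below_all, count_below_none; intros; lia.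
Qed.

Lemma count_below_neq_0 n : count_below (fun q => q <> 0) n = n - 1.
Proof.
  destruct n as [|n]; [reflexivity|].
  replace (S n) with (1 + n) by lia.
  rewrite count_below_add, count_below_none, count_below_all; intros; lia.
Qed.

Lemma count_below_multiples n : 0 < n -> count_below (fun q => q mod n = 0) (n * n) = n.
Proof.
  intros Hn.
  rewrite (count_below_prod _ (fun r => r = 0) (fun _ => True)) by (auto; intros; tauto).
  rewrite count_below_eq_0, count_below_all by auto. lia.
Qed.

End Counting.

Section ZeroOddDigits.
Local Open Scope Z_scope.
Local Notation pw p n := (p ^ Z.of_nat n)%Z.

Lemma pw_pos p n : 0 < p -> 0 < pw p n.
Proof. intros. apply Z.pow_pos_nonneg; lia. Qed.

Lemma pw_add p a b : pw p (a + b) = pw p a * pw p b.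
Proof. rewrite Nat2Z.inj_add. apply Z.pow_add_r; lia. Qed.

Lemma pw_succ p n : pw p (S n) = pw p n * p.
Proof.
  rewrite <- Nat.add_1_r, pw_add. change (Z.of_nat 1) with 1. rewrite Z.pow_1_r. reflexivity.
Qed.

Lemma lt_pw_2 p c : 0 <= c < p -> 0 <= c < pw p 2.
Proof. intros Hc. change (pw p 2) with (p * (p * 1)). nia. Qed.

Lemma Z_of_nat_pow p m : 0 <= p -> Z.of_nat (Z.to_nat p ^ m) = pw p m.
Proof. intros Hp. rewrite Nat2Z.inj_pow, Z2Nat.id; auto. Qed.

Lemma mod_pw_mod p x j k : (j <= k)%nat -> (x mod pw p k) mod pw p j = x mod pw p j.
Proof.
  intros H. apply Z.mod_mod_divide. replace k with (j + (k - j))%nat by lia.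
  rewrite pw_add. apply Z.divide_factor_l.
Qed.

Lemma mod_mul_split A p x : 0 < A -> 0 < p -> x mod (A * p) = x mod A + A * ((x / A) mod p).
Proof.
  intros HA Hp. symmetry. apply Z.mod_unique_pos with ((x / A) / p).
  - assert (H1 := Z.mod_pos_bound x A HA). assert (H2 := Z.mod_pos_bound (x / A) p Hp). nia.
  - rewrite (Z.div_mod x A) at 1 by lia. rewrite (Z.div_mod (x / A) p) at 1 by lia. ring.
Qed.

Lemma padic_residue p x j k : is_padic p x -> (j <= k)%nat -> x k mod pw p j = x j.
Proof.
  intros Hx Hjk. induction Hjk as [|k Hjk IH].
  - apply Z.mod_small, Hx.
  - rewrite <- (mod_pw_mod p _ j k) by exact Hjk. rewrite (proj2 (Hx k)). exact IH.
Qed.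

Lemma padic_0 p x : is_padic p x -> x 0%nat = 0.
Proof. intros H. destruct (H 0%nat) as [[H1 H2] _]. simpl in H2. lia. Qed.

Lemma is_padic_residues p a : 0 < p -> is_padic p (fun k => a mod pw p k).
Proof.
  intros Hp n. split.
  - apply Z.mod_pos_bound, pw_pos, Hp.
  - apply mod_pw_mod. lia.
Qed.

(* The digit of index i of x vanishes iff x (i+1) = x i; likewise for the integer a,
   iff a mod p^(i+1) = a mod p^i. *)
Definition zero_odd_digits (p : Z) (x : nat -> Z) : Prop :=
  is_padic p x /\ forall j, x (2 * j + 2)%nat = x (2 * j + 1)%nat.

Definition zero_odd_digits_below (p : Z) (m : nat) (a : Z) : Prop :=
  forall j, (2 * j + 2 <= m)%nat -> a mod pw p (2 * j + 2) = a mod pw p (2 * j + 1).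

Lemma zero_odd_digits_below_mod p i m a : (i <= m)%nat ->
  zero_odd_digits_below p i (a mod pw p m) <-> zero_odd_digits_below p i a.
Proof.
  intros Him. unfold zero_odd_digits_below.
  split; intros G j Hj; specialize (G j Hj); rewrite !mod_pw_mod in * by lia; exact G.
Qed.

Lemma zero_odd_digits_below_odd p k a :
  zero_odd_digits_below p (2 * k + 1) a <-> zero_odd_digits_below p (2 * k) a.
Proof. unfold zero_odd_digits_below. split; intros G j Hj; apply G; lia. Qed.

Lemma zero_odd_digits_below_even p k a : 0 < p ->
  zero_odd_digits_below p (2 * k + 2) a <->
  zero_odd_digits_below p (2 * k + 1) (a mod pw p (2 * k + 1)) /\
  (a / pw p (2 * k + 1)) mod p = 0.
Proof.
  intros Hp. rewrite zero_odd_digits_below_mod by lia.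
  assert (HA := pw_pos p (2 * k + 1) Hp).
  assert (Hsplit : a mod pw p (2 * k + 2) =
                   a mod pw p (2 * k + 1) + pw p (2 * k + 1) * ((a / pw p (2 * k + 1)) mod p)).
  { replace (2 * k + 2)%nat with (S (2 * k + 1)) by lia. rewrite pw_succ.
    apply mod_mul_split; assumption. }
  unfold zero_odd_digits_below. split.
  - intros G. split; [intros j Hj; apply G; lia|].
    specialize (G k ltac:(lia)). rewrite Hsplit in G. nia.
  - intros [G Hdigit] j Hj. destruct (Nat.eq_dec j k) as [->|Hjk].
    + rewrite Hsplit, Hdigit. ring.
    + apply G. lia.
Qed.

Lemma ball_in_complement_iff p a n : 0 < p -> 0 <= a < pw p n ->
  ball_in p (complement_in_Zp p (zero_odd_digits p)) a n <-> ~ zero_odd_digits_below p n a.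
Proof.
  intros Hp Ha. split.
  - intros Hball Hbelow.
    destruct (Hball (fun k => a mod pw p k) (is_padic_residues p a Hp)
                (Z.mod_small a _ Ha)) as [_ HK].
    apply HK. split; [apply is_padic_residues, Hp|].
    intros j. destruct (le_lt_dec (2 * j + 2) n) as [Hj|Hj]; [apply Hbelow, Hj|].
    assert (pw p n <= pw p (2 * j + 1)) by (apply Z.pow_le_mono_r; lia).
    assert (pw p (2 * j + 1) <= pw p (2 * j + 2)) by (apply Z.pow_le_mono_r; lia).
    rewrite !Z.mod_small; lia.
  - intros Hbelow y Hy Hyn. split; [exact Hy|]. intros [_ HK]. apply Hbelow.
    intros j Hj. rewrite <- Hyn, !padic_residue by (auto; lia). apply HK.
Qed.

Lemma maximal_ball_in_complement_iff p a n : 0 < p -> 0 <= a < pw p n -> (1 <= n)%nat ->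
  maximal_ball_in p (complement_in_Zp p (zero_odd_digits p)) a n <->
  ~ zero_odd_digits_below p n a /\ zero_odd_digits_below p (n - 1) a.
Proof.
  intros Hp Ha Hn. unfold maximal_ball_in.
  assert (Hr := Z.mod_pos_bound a (pw p (n - 1)) (pw_pos p (n - 1) Hp)).
  rewrite !ball_in_complement_iff, zero_odd_digits_below_mod by (auto; lia).
  split.
  - intros [_ [_ [H1 H2]]]. split; [exact H1 | apply NNPP, H2].
  - intros [H1 H2]. repeat split; auto; lia.
Qed.

Lemma count_zero_odd_digits_below p k : 0 < p ->
  count_below (fun a => zero_odd_digits_below p (2 * k + 1) (Z.of_nat a))
              (Z.to_nat p ^ (2 * k + 1)) = (Z.to_nat p ^ (k + 1))%nat.
Proof.
  intros Hp. set (pn := Z.to_nat p).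
  induction k as [|k IH].
  - apply count_below_all. intros a _ j Hj. lia.
  - set (A := (pn ^ (2 * k + 1))%nat).
    assert (HAZ : Z.of_nat A = pw p (2 * k + 1)) by (apply Z_of_nat_pow; lia).
    assert (HA : (0 < A)%nat) by lia.
    assert (Hpow : (pn ^ (2 * S k + 1) = A * (pn * pn))%nat).
    { unfold A. replace (2 * S k + 1)%nat with (2 * k + 1 + 2)%nat by lia.
      rewrite Nat.pow_add_r. f_equal. simpl. rewrite Nat.mul_1_r. reflexivity. }
    assert (Hsplit : forall a, (a < A * (pn * pn))%nat ->
      zero_odd_digits_below p (2 * S k + 1) (Z.of_nat a) <->
      zero_odd_digits_below p (2 * k + 1) (Z.of_nat (a mod A)) /\ ((a / A) mod pn = 0)%nat).
    { intros a _.
      replace (2 * S k + 1)%nat with (2 * (k + 1) + 1)%nat by lia.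
      rewrite zero_odd_digits_below_odd. replace (2 * (k + 1))%nat with (2 * k + 2)%nat by lia.
      rewrite zero_odd_digits_below_even, Nat2Z.inj_mod, HAZ by lia.
      assert (Hdigit : Z.of_nat ((a / A) mod pn) = (Z.of_nat a / pw p (2 * k + 1)) mod p)
        by (rewrite Nat2Z.inj_mod, Nat2Z.inj_div, HAZ; unfold pn; rewrite Z2Nat.id by lia;
            reflexivity).
      rewrite <- Hdigit. split; intros [H1 H2]; split; auto; lia. }
    rewrite Hpow, (count_below_prod _ (fun r => zero_odd_digits_below p (2 * k + 1) (Z.of_nat r))
                                    (fun q => (q mod pn = 0)%nat) _ _ HA Hsplit).
    fold A in IH. rewrite IH, count_below_multiples by lia.
    replace (S k + 1)%nat with (S (k + 1)) by lia. simpl. lia.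
Qed.

Lemma Z_of_nat_below_pw p n a : 0 < p -> (a < Z.to_nat (pw p n))%nat -> 0 <= Z.of_nat a < pw p n.
Proof. intros Hp Ha. assert (H := pw_pos p n Hp). lia. Qed.

Lemma string_mult_zero_odd_digits_0 p :
  string_mult p (complement_in_Zp p (zero_odd_digits p)) 0 = 0%nat.
Proof. apply count_below_none. intros a _ [H _]. lia. Qed.

Lemma string_mult_zero_odd_digits_odd p k : 0 < p ->
  string_mult p (complement_in_Zp p (zero_odd_digits p)) (2 * k + 1) = 0%nat.
Proof.
  intros Hp. apply count_below_none. intros a Ha H.
  apply maximal_ball_in_complement_iff in H; [| exact Hp | apply Z_of_nat_below_pw; auto | lia].
  replace (2 * k + 1 - 1)%nat with (2 * k)%nat in H by lia.
  rewrite zero_odd_digits_below_odd in H. tauto.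
Qed.

Lemma string_mult_zero_odd_digits_even p k : 0 < p ->
  string_mult p (complement_in_Zp p (zero_odd_digits p)) (2 * k + 2) =
  (Z.to_nat p ^ (k + 1) * (Z.to_nat p - 1))%nat.
Proof.
  intros Hp. unfold string_mult. set (pn := Z.to_nat p).
  set (A := (pn ^ (2 * k + 1))%nat).
  assert (HAZ : Z.of_nat A = pw p (2 * k + 1)) by (apply Z_of_nat_pow; lia).
  assert (HA : (0 < A)%nat) by lia.
  assert (Hlevel : Z.to_nat (pw p (2 * k + 2)) = (A * pn)%nat).
  { apply Nat2Z.inj. rewrite Z2Nat.id by (apply Z.lt_le_incl, pw_pos; lia).
    rewrite Nat2Z.inj_mul, HAZ. unfold pn. rewrite Z2Nat.id by lia.
    replace (2 * k + 2)%nat with (S (2 * k + 1)) by lia. apply pw_succ. }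
  assert (Hsplit : forall a, (a < A * pn)%nat ->
    maximal_ball_in p (complement_in_Zp p (zero_odd_digits p)) (Z.of_nat a) (2 * k + 2) <->
    zero_odd_digits_below p (2 * k + 1) (Z.of_nat (a mod A)) /\ (a / A <> 0)%nat).
  { intros a Ha.
    assert (Hrange : 0 <= Z.of_nat a < pw p (2 * k + 2))
      by (apply Z_of_nat_below_pw; [exact Hp | rewrite Hlevel; exact Ha]).
    assert (Hq : (a / A < pn)%nat) by (apply Nat.Div0.div_lt_upper_bound; lia).
    assert (Hdigit : (Z.of_nat a / pw p (2 * k + 1)) mod p = Z.of_nat (a / A)).
    { rewrite <- HAZ, <- Nat2Z.inj_div, Z.mod_small; [reflexivity | lia]. }
    rewrite maximal_ball_in_complement_iff by (auto; lia).
    replace (2 * k + 2 - 1)%nat with (2 * k + 1)%nat by lia.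
    rewrite zero_odd_digits_below_even, Hdigit by lia.
    rewrite <- (zero_odd_digits_below_mod p (2 * k + 1) (2 * k + 1) (Z.of_nat a)) by lia.
    rewrite Nat2Z.inj_mod, HAZ.
    assert (Hzero : Z.of_nat (a / A) = 0 <-> (a / A = 0)%nat) by lia. tauto. }
  rewrite Hlevel, (count_below_prod _ (fun r => zero_odd_digits_below p (2 * k + 1) (Z.of_nat r))
                                   (fun q => q <> 0%nat) _ _ HA Hsplit), count_below_neq_0.
  unfold A. rewrite count_zero_odd_digits_below by exact Hp. reflexivity.
Qed.

Lemma zero_odd_digits_compact p : padic_compact p (zero_odd_digits p).
Proof.
  split; [intros x [Hx _]; exact Hx|].
  intros x Hx HK.
  destruct (not_all_ex_not _ _ (fun H => HK (conj Hx H))) as [j Hj].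
  exists (2 * j + 2)%nat. intros y Hy Hyx [_ HKy]. apply Hj.
  rewrite <- Hyx, <- (padic_residue p x (2 * j + 1) (2 * j + 2)), <- Hyx by (auto; lia).
  rewrite padic_residue by (auto; lia). apply HKy.
Qed.

Lemma shift_mod_pw p c X n : 0 < p -> 0 <= c < pw p 2 ->
  (c + pw p 2 * X) mod pw p (n + 2) = c + pw p 2 * (X mod pw p n).
Proof.
  intros Hp Hc. assert (H2 := pw_pos p 2 Hp). assert (Hn := pw_pos p n Hp).
  replace (pw p (n + 2)) with (pw p 2 * pw p n) by (rewrite pw_add; ring).
  rewrite mod_mul_split by lia.
  replace (c + pw p 2 * X) with (c + X * pw p 2) by ring.
  rewrite Z.mod_add, Z.div_add, Z.mod_small, Z.div_small by lia. reflexivity.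
Qed.

Lemma sim_map_2_low p c x : 0 <= c < p -> is_padic p x ->
  sim_map p 2 c x 0 = 0 /\ sim_map p 2 c x 1 = c.
Proof.
  intros Hc Hx. unfold sim_map. simpl (0 - 2)%nat. simpl (1 - 2)%nat.
  rewrite (padic_0 p x Hx), Z.mul_0_r, Z.add_0_r. split; [apply Z.mod_1_r|].
  change (pw p 1) with (p ^ 1). rewrite Z.pow_1_r. apply Z.mod_small, Hc.
Qed.

Lemma sim_map_2_shift p c x k : 0 < p -> 0 <= c < p -> is_padic p x ->
  sim_map p 2 c x (k + 2) = c + pw p 2 * x k.
Proof.
  intros Hp Hc Hx. unfold sim_map. replace (k + 2 - 2)%nat with k by lia.
  rewrite shift_mod_pw, Z.mod_small by (exact Hp || apply Hx || apply lt_pw_2, Hc). reflexivity.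
Qed.

Definition digits (p : Z) : list Z := map Z.of_nat (seq 0 (Z.to_nat p)).

Lemma in_digits p c : 0 <= p -> In c (digits p) <-> 0 <= c < p.
Proof.
  intros Hp. unfold digits. rewrite in_map_iff. split.
  - intros [n [<- Hn]]. apply in_seq in Hn. lia.
  - intros Hc. exists (Z.to_nat c). split; [lia | apply in_seq; lia].
Qed.

Lemma digits_length p : length (digits p) = Z.to_nat p.
Proof. unfold digits. rewrite length_map, length_seq. reflexivity. Qed.

Lemma digits_NoDup p : NoDup (digits p).
Proof.
  unfold digits. apply NoDup_map_NoDup_ForallPairs; [|apply seq_NoDup].
  intros a b _ _ H. apply Nat2Z.inj, H.
Qed.

Lemma zero_odd_digits_image p c x : 0 < p -> 0 <= c < p -> zero_odd_digits p x ->
  zero_odd_digits p (sim_map p 2 c x).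
Proof.
  intros Hp Hc [Hx HKx].
  destruct (sim_map_2_low p c x Hc Hx) as [Y0 Y1].
  assert (Yk : forall k, sim_map p 2 c x (k + 2) = c + pw p 2 * x k)
    by (intros k; apply sim_map_2_shift; auto; lia).
  assert (Hx0 := padic_0 p x Hx).
  assert (Y2 : sim_map p 2 c x 2 = c).
  { assert (H := Yk 0%nat). rewrite Hx0, Z.mul_0_r, Z.add_0_r in H. exact H. }
  split.
  - intros n. split; [apply Z.mod_pos_bound, pw_pos; lia|].
    destruct n as [|[|k]].
    + rewrite Y0. apply Z.mod_1_r.
    + rewrite Y2, Y1. change (pw p 1) with (p ^ 1). rewrite Z.pow_1_r. apply Z.mod_small, Hc.
    + replace (S (S (S k))) with (S k + 2)%nat by lia. replace (S (S k)) with (k + 2)%nat by lia.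
      rewrite !Yk, shift_mod_pw, (proj2 (Hx k)) by (exact Hp || apply lt_pw_2, Hc).
      reflexivity.
  - intros [|j].
    + change (sim_map p 2 c x 2 = sim_map p 2 c x 1). rewrite Y2, Y1. reflexivity.
    + replace (2 * S j + 2)%nat with ((2 * j + 2) + 2)%nat by lia.
      replace (2 * S j + 1)%nat with ((2 * j + 1) + 2)%nat by lia.
      rewrite !Yk, HKx. reflexivity.
Qed.

Lemma zero_odd_digits_preimage p y : 0 < p -> zero_odd_digits p y ->
  exists c x, 0 <= c < p /\ zero_odd_digits p x /\ forall k, y k = sim_map p 2 c x k.
Proof.
  intros Hp [Hy HK].
  assert (HA : 0 < pw p 2) by (apply pw_pos; lia).
  set (c := y 1%nat). set (x := fun k => y (k + 2)%nat / pw p 2).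
  assert (Hc : 0 <= c < p) by (destruct (Hy 1%nat) as [H _]; simpl in H; unfold c; lia).
  assert (Hyx : forall k, y (k + 2)%nat = c + pw p 2 * x k).
  { intros k. rewrite (Z.div_mod (y (k + 2)%nat) (pw p 2)) at 1 by lia.
    assert (H2 := HK 0%nat). simpl in H2.
    rewrite padic_residue, H2 by (auto; lia). unfold c, x. ring. }
  assert (Hx : is_padic p x).
  { intros n. split.
    - destruct (Hy (n + 2)%nat) as [Hr _]. unfold x. split; [apply Z.div_pos; lia|].
      apply Z.div_lt_upper_bound; [exact HA|]. rewrite <- (Z.mul_comm (pw p n)), <- pw_add. lia.
    - destruct (Hy (n + 2)%nat) as [_ Hnext].
      replace (S (n + 2)) with (S n + 2)%nat in Hnext by lia.
      rewrite !Hyx, shift_mod_pw in Hnext by (exact Hp || apply lt_pw_2, Hc).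
      nia. }
  exists c, x. split; [exact Hc|]. split.
  - split; [exact Hx|]. intros j. unfold x.
    replace (2 * j + 2 + 2)%nat with (2 * (j + 1) + 2)%nat by lia.
    replace (2 * j + 1 + 2)%nat with (2 * (j + 1) + 1)%nat by lia.
    rewrite HK. reflexivity.
  - destruct (sim_map_2_low p c x Hc Hx) as [Y0 Y1].
    intros [|[|k]].
    + rewrite Y0. apply (padic_0 p y Hy).
    + rewrite Y1. reflexivity.
    + replace (S (S k)) with (k + 2)%nat by lia.
      rewrite Hyx, sim_map_2_shift by (auto; lia). reflexivity.
Qed.

Lemma zero_odd_digits_self_similar p : 0 < p -> forall y,
  zero_odd_digits p y <->
  exists c, In c (digits p) /\ exists x, zero_odd_digits p x /\ forall k, y k = sim_map p 2 c x k.
Proof.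
  intros Hp y. split.
  - intros Hyk. destruct (zero_odd_digits_preimage p y Hp Hyk) as [c [x [Hc [Hxk Hyx]]]].
    exists c. split; [apply in_digits; lia|]. exists x. auto.
  - intros [c [Hc [x [Hxk Hyx]]]]. apply in_digits in Hc; [|lia].
    assert (Himage := zero_odd_digits_image p c x Hp Hc Hxk).
    destruct Himage as [Himg HKimg]. split.
    + intros n. rewrite !Hyx. apply Himg.
    + intros j. rewrite !Hyx. apply HKimg.
Qed.

Lemma zero_odd_digits_attractor p : 0 < p -> ss_attractor p 2 (digits p) (zero_odd_digits p).
Proof.
  intros Hp. split; [apply zero_odd_digits_compact|]. split.
  - exists (fun k => 0 mod pw p k). split; [apply is_padic_residues, Hp | reflexivity].
  - apply zero_odd_digits_self_similar, Hp.
Qed.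

End ZeroOddDigits.

Lemma exp_taylor1_bound a : Rabs a <= 1/2 -> Rabs (exp a - 1 - a) <= 2 * a^2.
Proof.
  intros Ha. apply Rabs_le_between in Ha.
  assert (Hlow := exp_ineq1_le a).
  assert (Hup : exp a * (1 - a) <= 1).
  { assert (H := exp_ineq1_le (- a)). rewrite exp_Ropp in H.
    assert (Hpos := exp_pos a).
    apply (Rmult_le_compat_l (exp a)) in H; [|lra].
    rewrite Rinv_r in H by lra. lra. }
  rewrite Rabs_pos_eq by lra. nra.
Qed.

Lemma exp_sub1_bound a : Rabs a <= 1/2 -> Rabs (exp a - 1) <= 2 * Rabs a.
Proof.
  intros Ha. assert (H := exp_taylor1_bound a Ha).
  apply Rabs_le_between in H. apply Rabs_le_between.
  destruct (Rle_lt_dec 0 a).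
  - rewrite Rabs_pos_eq in * by lra. nra.
  - rewrite Rabs_left in * by lra. nra.
Qed.

Lemma Rabs_sin_le b : Rabs (sin b) <= Rabs b.
Proof.
  assert (Hpos : forall x, 0 < x -> Rabs (sin x) <= x).
  { intros x Hx. assert (H := SIN_bound x). assert (H' := sin_lt_x x Hx).
    apply Rabs_le_between. split; [|lra].
    destruct (Rle_lt_dec 1 x); [lra|].
    assert (0 < sin x) by (apply sin_gt_0; assert (H2 := PI2_1); lra). lra. }
  destruct (Rtotal_order b 0) as [Hb|[->|Hb]].
  - replace (sin b) with (- sin (- b)) by (rewrite sin_neg; ring).
    rewrite Rabs_Ropp, (Rabs_left b) by lra. apply Hpos; lra.
  - rewrite sin_0. lra.
  - rewrite (Rabs_pos_eq b) by lra. apply Hpos; lra.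
Qed.

Lemma cos_bounds b : 1 - b^2/2 <= cos b <= 1.
Proof.
  split; [|apply COS_bound].
  replace b with (2 * (b/2)) at 2 by field. rewrite cos_2a_sin.
  assert (H := Rabs_sin_le (b/2)).
  assert (Hsq : sin (b/2) ^ 2 <= (b/2) ^ 2).
  { rewrite <- (pow2_abs (sin _)), <- (pow2_abs (b/2)).
    apply pow_incr. split; [apply Rabs_pos | exact H]. }
  nra.
Qed.

Lemma sin_taylor1_bound b : Rabs b <= 1/2 -> Rabs (sin b - b) <= b^2.
Proof.
  assert (Hpos : forall x, 0 <= x <= 1/2 -> Rabs (sin x - x) <= x^2).
  { intros x Hx. assert (HPI := PI2_3_2).
    destruct (SIN x) as [Hlb _]; try lra.
    replace (sin_lb x) with (x - x^3/6 + x^5/120 - x^7/5040) in Hlb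
      by (unfold sin_lb, sin_approx, sin_term; simpl; field).
    assert (sin x <= x)
      by (destruct (Req_dec x 0) as [->|]; [rewrite sin_0; lra | left; apply sin_lt_x; lra]).
    rewrite Rabs_left1 by lra.
    assert (0 <= x^5) by (apply pow_le; lra).
    assert (x^7 <= x^5) by (replace (x^7) with (x^5 * (x * x)) by ring;
      rewrite <- (Rmult_1_r (x^5)) at 2; apply Rmult_le_compat_l; nra).
    assert (x^3 <= x^2) by (replace (x^3) with (x^2 * x) by ring; nra).
    lra. }
  intros Hb. apply Rabs_le_between in Hb. destruct (Rle_dec 0 b).
  - apply Hpos. lra.
  - replace (sin b - b) with (- (sin (- b) - - b)) by (rewrite sin_neg; ring).
    rewrite Rabs_Ropp. replace (b ^ 2) with ((- b) ^ 2) by ring.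
    apply Hpos. lra.
Qed.

Definition cexp (z : C) : C := (exp (Re z) * cos (Im z), exp (Re z) * sin (Im z)).

Lemma cexp_add z w : cexp (z + w) = (cexp z * cexp w)%C.
Proof.
  destruct z as [a b], w as [c d]. unfold cexp, Cplus, Cmult, Re, Im; simpl.
  rewrite exp_plus, cos_plus, sin_plus. f_equal; ring.
Qed.

Lemma cexp_0 : cexp 0 = 1.
Proof.
  unfold cexp, Re, Im; simpl. rewrite exp_0, cos_0, sin_0.
  apply injective_projections; simpl; ring.
Qed.

Lemma Cmod_cexp z : Cmod (cexp z) = exp (Re z).
Proof.
  unfold cexp, Cmod; cbn [fst snd].
  assert (H := sin2_cos2 (Im z)). unfold Rsqr in H.
  replace ((exp (Re z) * cos (Im z)) ^ 2 + (exp (Re z) * sin (Im z)) ^ 2)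
    with (exp (Re z) ^ 2) by nra.
  apply sqrt_pow2. left; apply exp_pos.
Qed.

Lemma cexp_mul_nat (n : nat) z : cexp (RtoC (INR n) * z) = (cexp z ^ n)%C.
Proof.
  induction n as [|n IH].
  - replace (RtoC (INR 0) * z)%C with (RtoC 0) by (simpl; ring). apply cexp_0.
  - rewrite S_INR, Cpow_S, <- IH, <- cexp_add. f_equal. rewrite RtoC_plus. ring.
Qed.

Lemma Cmod_le_Rabs_sum a b : Cmod (a, b) <= Rabs a + Rabs b.
Proof.
  unfold Cmod; cbn [fst snd].
  assert (H1 := Rabs_pos a); assert (H2 := Rabs_pos b).
  rewrite <- (sqrt_pow2 (Rabs a + Rabs b)) by lra.
  apply sqrt_le_1_alt. rewrite <- (pow2_abs a), <- (pow2_abs b). nra.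
Qed.

Lemma cexp_taylor1_bound h : Cmod h <= 1/2 -> Cmod (cexp h - 1 - h) <= 3 * Cmod h ^ 2.
Proof.
  destruct h as [a b]. intros Hh.
  assert (Hm := Rmax_Cmod (a, b)). cbn [fst snd] in Hm.
  assert (Ha : Rabs a <= 1/2) by (assert (H := Rmax_l (Rabs a) (Rabs b)); lra).
  assert (Hb : Rabs b <= 1/2) by (assert (H := Rmax_r (Rabs a) (Rabs b)); lra).
  assert (Hsq : Cmod (a, b) ^ 2 = a^2 + b^2) by (unfold Cmod; apply pow2_sqrt; simpl; nra).
  replace (cexp (a, b) - 1 - (a, b))%C with (exp a * cos b - 1 - a, exp a * sin b - b)
    by (unfold cexp, Re, Im, Cminus, Cplus, Copp; simpl; f_equal; ring).
  eapply Rle_trans; [apply Cmod_le_Rabs_sum|]. rewrite Hsq.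
  assert (Hexp1 := exp_taylor1_bound a Ha). assert (Hexp := exp_sub1_bound a Ha).
  assert (Hcos := cos_bounds b). assert (Hsin := Rabs_sin_le b).
  assert (Hsin1 := sin_taylor1_bound b Hb).
  assert (He2 : 0 < exp a <= 2)
    by (split; [apply exp_pos|]; apply Rabs_le_between in Hexp; lra).
  assert (Hre : Rabs (exp a * cos b - 1 - a) <= 2 * a^2 + b^2).
  { replace (exp a * cos b - 1 - a) with ((exp a - 1 - a) + exp a * (cos b - 1)) by ring.
    eapply Rle_trans; [apply Rabs_triang|].
    rewrite Rabs_mult, (Rabs_pos_eq (exp a)) by lra.
    rewrite (Rabs_left1 (cos b - 1)) by lra.
    assert (exp a * (1 - cos b) <= 2 * (b^2/2)) by (apply Rmult_le_compat; lra).
    lra. }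
  assert (Him : Rabs (exp a * sin b - b) <= a^2 + 2 * b^2).
  { replace (exp a * sin b - b) with ((exp a - 1) * sin b + (sin b - b)) by ring.
    eapply Rle_trans; [apply Rabs_triang|]. rewrite Rabs_mult.
    assert (Hcross : Rabs (exp a - 1) * Rabs (sin b) <= 2 * Rabs a * Rabs b)
      by (apply Rmult_le_compat; auto using Rabs_pos).
    rewrite <- (pow2_abs a), <- (pow2_abs b) in *.
    assert (Hsq2 := pow2_ge_0 (Rabs a - Rabs b)). nra. }
  lra.
Qed.

Lemma Cone_minus_neq_0 (w : C) : w <> 1%C -> (1 - w)%C <> 0%C.
Proof.
  intros Hw H. apply Hw. replace w with (1 - (1 - w))%C by ring. rewrite H. ring.
Qed.

Local Notation is_Cderive := (@is_derive C_AbsRing (AbsRing_NormedModule C_AbsRing)).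

Lemma is_derive_of_quadratic_remainder (g : C -> C) (z l : C) (d M : R) : 0 < d ->
  (forall h : C, Cmod h < d -> Cmod (g (z + h) - g z - l * h)%C <= M * Cmod h ^ 2) ->
  is_Cderive g z l.
Proof.
  intros Hd Hrem. split; [apply is_linear_scal_l|].
  intros x Hx.
  apply (@is_filter_lim_locally_unique C_AbsRing (AbsRing_NormedModule C_AbsRing)) in Hx.
  subst x.
  intros eps.
  assert (HM : 0 < Rabs M + 1) by (assert (H := Rabs_pos M); lra).
  set (d' := Rmin d (eps / (Rabs M + 1))).
  assert (Hd' : 0 < d') by (apply Rmin_pos; [lra | apply Rdiv_lt_0_compat; [apply cond_pos | lra]]).
  exists (mkposreal d' Hd'). intros y Hy. change C in y.
  change (Cmod (y - z)%C < d') in Hy. unfold d' in Hy.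
  assert (Hy1 : Cmod (y - z)%C < d) by (assert (H := Rmin_l d (eps / (Rabs M + 1))); lra).
  assert (Hy2 : (Rabs M + 1) * Cmod (y - z)%C <= eps).
  { assert (H := Rmin_r d (eps / (Rabs M + 1))).
    apply (Rmult_le_reg_r (/ (Rabs M + 1))); [apply Rinv_0_lt_compat; lra|].
    rewrite Rmult_comm, <- Rmult_assoc, Rinv_l, Rmult_1_l by lra. unfold Rdiv in *. lra. }
  specialize (Hrem (y - z)%C Hy1). replace (z + (y - z))%C with y in Hrem by ring.
  change (Cmod (g y - g z - (y - z) * l)%C <= eps * Cmod (y - z)%C).
  rewrite Cmult_comm. eapply Rle_trans; [exact Hrem|].
  assert (Hc := Cmod_ge_0 (y - z)%C). assert (HMa := Rle_abs M). simpl. nra.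
Qed.

Lemma is_derive_cexp z : is_Cderive cexp z (cexp z).
Proof.
  apply (is_derive_of_quadratic_remainder _ z _ (1/2) (3 * exp (Re z))); [lra|].
  intros h Hh. rewrite cexp_add.
  replace (cexp z * cexp h - cexp z - cexp z * h)%C with (cexp z * (cexp h - 1 - h))%C by ring.
  rewrite Cmod_mult, Cmod_cexp.
  assert (H := cexp_taylor1_bound h ltac:(lra)). assert (He := exp_pos (Re z)). nra.
Qed.

Lemma is_derive_Cinv (u : C) : u <> 0%C ->
  is_Cderive Cinv u (- / (u * u))%C.
Proof.
  intros Hu. assert (Hm : 0 < Cmod u) by (apply Cmod_gt_0; auto).
  apply (is_derive_of_quadratic_remainder _ u _ (Cmod u / 2) (2 / Cmod u ^ 3)); [lra|].
  intros h Hh.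
  assert (Huh : Cmod u / 2 <= Cmod (u + h)%C).
  { assert (H := Cmod_triangle (u + h)%C (- h)%C). rewrite Cmod_opp in H.
    replace (u + h + - h)%C with u in H by ring. lra. }
  assert (Huh0 : (u + h)%C <> 0%C) by (apply Cmod_gt_0; lra).
  replace (/ (u + h) - / u - - / (u * u) * h)%C with (h * h / (u * u * (u + h)))%C
    by (field; auto).
  unfold Cdiv. rewrite !Cmod_mult, Cmod_inv by (repeat apply Cmult_neq_0; auto).
  rewrite !Cmod_mult.
  assert (Hc := Cmod_ge_0 h).
  apply (Rmult_le_reg_r (Cmod u * Cmod u * Cmod (u + h)%C)); [apply Rmult_lt_0_compat; nra|].
  replace (Cmod h * Cmod h * / (Cmod u * Cmod u * Cmod (u + h)%C) *
           (Cmod u * Cmod u * Cmod (u + h)%C))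
    with (Cmod h ^ 2) by (field; split; lra).
  replace (2 / Cmod u ^ 3 * Cmod h ^ 2 * (Cmod u * Cmod u * Cmod (u + h)%C))
    with (Cmod h ^ 2 * (2 * Cmod (u + h)%C / Cmod u)) by (field; lra).
  assert (1 <= 2 * Cmod (u + h)%C / Cmod u)
    by (apply (Rmult_le_reg_r (Cmod u)); [lra|]; unfold Rdiv; rewrite Rmult_assoc, Rinv_l; lra).
  nra.
Qed.

Lemma is_derive_affine (a b s : C) :
  is_Cderive (fun s => a + b * s)%C s b.
Proof.
  apply (is_derive_of_quadratic_remainder _ s b 1 0); [lra|].
  intros h _. replace (a + b * (s + h) - (a + b * s) - b * h)%C with (RtoC 0) by ring.
  rewrite Cmod_0. nra.
Qed.

Lemma cexp_eq_1 z : cexp z = 1%C <-> Re z = 0 /\ exists k : Z, Im z = 2 * (IZR k * PI).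
Proof.
  destruct z as [a b]. unfold cexp, Re, Im; cbn [fst snd]. split.
  - intros H. injection H as Hre Him.
    assert (He := exp_pos a).
    assert (Hsin : sin b = 0) by (destruct (Rmult_integral _ _ Him); [lra | auto]).
    assert (Hcos : cos b = 1).
    { assert (H := sin2_cos2 b). unfold Rsqr in H. rewrite Hsin in H.
      assert (0 < cos b) by nra. nra. }
    rewrite Hcos, Rmult_1_r, <- exp_0 in Hre. split; [now apply exp_inv|].
    replace b with (2 * (b / 2)) in Hcos by field. rewrite cos_2a_sin in Hcos.
    destruct (sin_eq_0_0 (b / 2)) as [k Hk]; [nra|]. exists k. lra.
  - intros [-> [k ->]]. rewrite exp_0, cos_2a_sin, sin_2a, sin_eq_0_1 by (exists k; reflexivity).
    apply injective_projections; simpl; ring.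
Qed.

(* p^(1-2s) for L = log p *)
Definition zeta_ratio (L : R) (s : C) : C := cexp (RtoC L * (1 - 2 * s)).

Lemma zeta_ratio_alt L s : zeta_ratio L s = cexp (L * (1 - 2 * Re s), - 2 * L * Im s).
Proof.
  unfold zeta_ratio. f_equal. destruct s as [x y].
  apply injective_projections; unfold Re, Im; simpl; ring.
Qed.

Lemma Cmod_zeta_ratio L s : Cmod (zeta_ratio L s) = exp (L * (1 - 2 * Re s)).
Proof. rewrite zeta_ratio_alt, Cmod_cexp. reflexivity. Qed.

Lemma ex_derive_zeta_ratio L s :
  @ex_derive C_AbsRing (AbsRing_NormedModule C_AbsRing) (zeta_ratio L) s.
Proof.
  eexists. unfold zeta_ratio.
  apply (@is_derive_comp C_AbsRing (AbsRing_NormedModule C_AbsRing) cexp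
                        (fun s => L * (1 - 2 * s))%C).
  - apply is_derive_cexp.
  - eapply is_derive_ext; [| apply (is_derive_affine L (- 2 * L) s)].
    intros t. simpl. ring.
Qed.

Definition critical_lattice (L : R) (s : C) : Prop :=
  exists n : Z, s = (1 / 2, IZR n * (PI / L)).

Lemma zeta_ratio_eq_1 L s : 0 < L -> zeta_ratio L s = 1%C <-> critical_lattice L s.
Proof.
  intros HL. rewrite zeta_ratio_alt, cexp_eq_1. unfold Re, Im. cbn [fst snd].
  destruct s as [x y]; cbn [fst snd]. split.
  - intros [Hre [k Hk]]. exists (- k)%Z. rewrite opp_IZR.
    f_equal; [nra|]. apply (Rmult_eq_reg_l L); [|lra]. field_simplify; [|lra]. nra.
  - intros [n Hn]. injection Hn as -> ->. split; [lra|].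
    exists (- n)%Z. rewrite opp_IZR. field. lra.
Qed.

Lemma discrete_of_separated (S : C -> Prop) (delta : R) : 0 < delta ->
  (forall w1 w2, S w1 -> S w2 -> w1 <> w2 -> delta <= Cmod (w1 - w2)) ->
  forall z, exists r, 0 < r /\ forall w, w <> z -> Cmod (w - z) < r -> ~ S w.
Proof.
  intros Hdelta Hsep z.
  destruct (classic (exists q, q <> z /\ Cmod (q - z) < delta / 2 /\ S q))
    as [[q [Hqz [Hq HSq]]] | Hnone].
  - exists (Cmod (q - z)). split; [apply Cmod_gt_0; intros H; apply Hqz;
      replace q with (q - z + z)%C by ring; rewrite H; ring|].
    intros w Hwz Hw HSw.
    assert (Hwq : w <> q) by (intros ->; lra).
    assert (Htri := Cmod_triangle (w - z) (z - q)).
    replace (w - z + (z - q))%C with (w - q)%C in Htri by ring.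
    replace (Cmod (z - q)) with (Cmod (q - z)) in Htri by (rewrite <- Cmod_opp; f_equal; ring).
    assert (H := Hsep w q HSw HSq Hwq). lra.
  - exists (delta / 2). split; [lra|]. intros w Hwz Hw HSw. apply Hnone. exists w. auto.
Qed.

Lemma Rabs_Im_le_Cmod (w : C) : Rabs (Im w) <= Cmod w.
Proof.
  assert (H := Rmax_Cmod w). assert (H' := Rmax_r (Rabs (fst w)) (Rabs (snd w))).
  unfold Im. lra.
Qed.

Lemma critical_lattice_separated L w1 w2 : 0 < L ->
  critical_lattice L w1 -> critical_lattice L w2 -> w1 <> w2 -> PI / L <= Cmod (w1 - w2).
Proof.
  intros HL [n1 Hw1] [n2 Hw2] Hne.
  assert (Hd : 0 < PI / L) by (apply Rdiv_lt_0_compat; [apply PI_RGT_0 | exact HL]).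
  assert (Hn : n1 <> n2) by (intros ->; apply Hne; congruence).
  assert (Hgap : 1 <= Rabs (IZR n1 - IZR n2)).
  { rewrite <- minus_IZR, <- abs_IZR. apply IZR_le. lia. }
  assert (Him : Im (w1 - w2) = (IZR n1 - IZR n2) * (PI / L))
    by (rewrite Hw1, Hw2; unfold Im; simpl; ring).
  eapply Rle_trans; [| apply Rabs_Im_le_Cmod].
  rewrite Him, Rabs_mult, (Rabs_pos_eq (PI / L)) by lra. nra.
Qed.

(* (P - 1) W / (1 - W) = sum_k (P - 1) W^(k+1), where W = P^(1-2s). *)
Definition zeta_closed (P : R) (s : C) : C :=
  ((/ (1 - zeta_ratio (ln P) s) - 1) * RtoC (P - 1))%C.

Lemma ex_derive_zeta_closed P z : zeta_ratio (ln P) z <> 1%C ->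
  ex_derive (K := C_AbsRing) (V := C_NormedModule) (zeta_closed P) z.
Proof.
  intros Hz. assert (Hu := Cone_minus_neq_0 _ Hz).
  destruct (ex_derive_zeta_ratio (ln P) z) as [dW HW].
  eexists. unfold zeta_closed.
  apply (@is_derive_scal_l C_AbsRing C_NormedModule (fun s => (/ (1 - zeta_ratio (ln P) s) - 1)%C)).
  apply (@is_derive_minus C_AbsRing (AbsRing_NormedModule C_AbsRing)
           (fun s => / (1 - zeta_ratio (ln P) s))%C (fun _ => RtoC 1)); [|apply is_derive_const].
  apply (@is_derive_comp C_AbsRing (AbsRing_NormedModule C_AbsRing) Cinv).
  - apply is_derive_Cinv. exact Hu.
  - apply (@is_derive_minus C_AbsRing (AbsRing_NormedModule C_AbsRing) (fun _ => RtoC 1)).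
    + apply is_derive_const.
    + exact HW.
Qed.

Lemma Cmod_zeta_closed_lower P z : 1 < P -> (1 - zeta_ratio (ln P) z)%C <> 0%C ->
  (P - 1) * (/ Cmod (1 - zeta_ratio (ln P) z) - 1) <= Cmod (zeta_closed P z).
Proof.
  intros HP Hu. unfold zeta_closed.
  rewrite Cmod_mult, Cmod_R, (Rabs_pos_eq (P - 1)), Rmult_comm by lra.
  apply Rmult_le_compat_r; [lra|].
  rewrite <- Cmod_inv by exact Hu.
  assert (H := Cmod_triangle (/ (1 - zeta_ratio (ln P) z) - 1) 1).
  replace (/ (1 - zeta_ratio (ln P) z) - 1 + 1)%C with (/ (1 - zeta_ratio (ln P) z))%C in H by ring.
  rewrite Cmod_1 in H. lra.
Qed.

Lemma locally_of_Cmod_ball (z : C) (Q : C -> Prop) (d : R) : 0 < d ->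
  (forall y, Cmod (y - z) < d -> Q y) -> locally (T := C_UniformSpace) z Q.
Proof.
  intros Hd H.
  assert (Hn := @norm_factor_gt_0 C_AbsRing C_NormedModule).
  exists (mkposreal (d / @norm_factor C_AbsRing C_NormedModule)
                    ltac:(apply Rdiv_lt_0_compat; auto)).
  intros y Hy. apply H.
  apply (@norm_compat2 C_AbsRing C_NormedModule) in Hy. simpl in Hy.
  replace (norm_factor * (d / norm_factor)) with d in Hy by (field; lra).
  exact Hy.
Qed.

Lemma zeta_closed_pole P z0 : 1 < P -> critical_lattice (ln P) z0 ->
  filterlim (fun z => Cmod (zeta_closed P z)) (locally' (T := C_UniformSpace) z0)
            (Rbar_locally p_infty).
Proof.
  intros HP Hz0 Q [M HM].
  set (L := ln P). assert (HL : 0 < L) by (unfold L; rewrite <- ln_1; apply ln_increasing; lra).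
  set (eps := / (Rabs M / (P - 1) + 2)).
  assert (Ha : 0 <= Rabs M / (P - 1)) by (apply Rdiv_le_0_compat; [apply Rabs_pos | lra]).
  assert (Heps : 0 < eps) by (apply Rinv_0_lt_compat; lra).
  assert (Hc := @ex_derive_continuous C_AbsRing (AbsRing_NormedModule C_AbsRing) _ z0
                  (ex_derive_zeta_ratio L z0)).
  unfold continuous in Hc. rewrite filterlim_locally in Hc.
  destruct (Hc (mkposreal eps Heps)) as [d Hd].
  destruct (discrete_of_separated (critical_lattice L) (PI / L)
              ltac:(apply Rdiv_lt_0_compat; [apply PI_RGT_0 | exact HL])
              (fun w1 w2 => critical_lattice_separated L w1 w2 HL) z0) as [r [Hr Hdisc]].
  apply (locally_of_Cmod_ball z0 _ (Rmin d r)); [apply Rmin_pos; [apply cond_pos | exact Hr]|].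
  intros y Hy Hne. apply HM.
  assert (Hyd : Cmod (y - z0) < d) by (assert (H := Rmin_l d r); lra).
  assert (Hyr : Cmod (y - z0) < r) by (assert (H := Rmin_r d r); lra).
  set (u := (1 - zeta_ratio L y)%C).
  assert (Hu : u <> 0%C).
  { apply Cone_minus_neq_0. rewrite zeta_ratio_eq_1 by exact HL. exact (Hdisc y Hne Hyr). }
  assert (Hum : 0 < Cmod u) by (apply Cmod_gt_0; exact Hu).
  assert (Hue : Cmod u < eps).
  { assert (H := Hd y Hyd). change (Cmod (zeta_ratio L y - zeta_ratio L z0) < eps) in H.
    rewrite (proj2 (zeta_ratio_eq_1 L z0 HL) Hz0) in H.
    unfold u. rewrite <- Cmod_opp.
    replace (- (1 - zeta_ratio L y))%C with (zeta_ratio L y - 1)%C by ring. exact H. }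
  assert (Hbig : / eps < / Cmod u) by (apply Rinv_lt_contravar; [apply Rmult_lt_0_compat|]; lra).
  unfold eps in Hbig. rewrite Rinv_inv in Hbig.
  assert (Hlow := Cmod_zeta_closed_lower P y HP Hu). fold L u in Hlow.
  assert (H1 : Rabs M + (P - 1) < (P - 1) * (/ Cmod u - 1)).
  { replace (Rabs M + (P - 1)) with ((P - 1) * (Rabs M / (P - 1) + 1)) by (field; lra).
    apply Rmult_lt_compat_l; lra. }
  assert (HMa := Rle_abs M). lra.
Qed.

Lemma is_series_interleave_zeros {K : AbsRing} {V : NormedModule K} (a b : nat -> V) (l : V) :
  a 0%nat = zero -> (forall k, a (2 * k + 1)%nat = zero) -> (forall k, a (2 * k + 2)%nat = b k) ->
  is_series b l -> is_series a l.
Proof.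
  intros H0 Hodd Heven Hb.
  assert (Hsum : forall k, sum_n a (2 * k + 2) = sum_n b k /\ sum_n a (2 * k + 3) = sum_n b k).
  { assert (Hstep : forall k, sum_n a (2 * k + 3) = sum_n a (2 * k + 2)).
    { intros k. replace (2 * k + 3)%nat with (S (2 * k + 2)) by lia.
      rewrite sum_Sn. replace (S (2 * k + 2)) with (2 * S k + 1)%nat by lia.
      rewrite Hodd, plus_zero_r. reflexivity. }
    induction k as [|k [_ IH]].
    - assert (E : sum_n a 2 = sum_n b 0).
      { assert (H1 := Hodd 0%nat). assert (H2 := Heven 0%nat). simpl in H1, H2.
        rewrite !sum_Sn, !sum_O, H0, H1, H2, !plus_zero_l. reflexivity. }
      split; [exact E | rewrite (Hstep 0%nat); exact E].
    - assert (E : sum_n a (2 * S k + 2) = sum_n b (S k)).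
      { replace (2 * S k + 2)%nat with (S (2 * k + 3)) by lia.
        rewrite !sum_Sn, IH. replace (S (2 * k + 3)) with (2 * S k + 2)%nat by lia.
        rewrite Heven. reflexivity. }
      split; [exact E | rewrite Hstep; exact E]. }
  intros Q HQ. destruct (Hb Q HQ) as [M HM]. exists (2 * M + 2)%nat. intros n Hn.
  destruct (Nat.Even_or_Odd n) as [[m ->] | [m ->]].
  - replace (2 * m)%nat with (2 * (m - 1) + 2)%nat by lia.
    rewrite (proj1 (Hsum _)). apply HM. lia.
  - replace (2 * m + 1)%nat with (2 * (m - 1) + 3)%nat by lia.
    rewrite (proj2 (Hsum _)). apply HM. lia.
Qed.

Lemma is_series_Cgeom (q : C) : Cmod q < 1 -> is_series (fun n => q ^ n)%C (/ (1 - q))%C.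
Proof.
  intros Hq.
  assert (H1q : (1 - q)%C <> 0%C)
    by (apply Cone_minus_neq_0; intros ->; rewrite Cmod_1 in Hq; lra).
  assert (Hm : 0 < Cmod (1 - q)) by (apply Cmod_gt_0; exact H1q).
  assert (Hsum : forall n, sum_n (fun k => q ^ k)%C n = ((1 - q ^ S n) / (1 - q))%C).
  { induction n as [|n IH].
    - rewrite sum_O. simpl. field. exact H1q.
    - rewrite sum_Sn, IH. change (plus ?x ?y) with (Cplus x y). simpl. field. exact H1q. }
  unfold is_series. apply filterlim_locally_ball_norm. intros eps.
  assert (Hgeom : is_lim_seq (fun n => Cmod q ^ n) 0)
    by (apply is_lim_seq_geom; rewrite Rabs_pos_eq; [exact Hq | apply Cmod_ge_0]).
  apply is_lim_seq_spec in Hgeom.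
  assert (Heps : 0 < eps * Cmod (1 - q)) by (apply Rmult_lt_0_compat; [apply cond_pos | exact Hm]).
  destruct (Hgeom (mkposreal _ Heps)) as [N HN]. exists N. intros n Hn.
  change (Cmod (sum_n (fun k => q ^ k)%C n - / (1 - q))%C < eps).
  rewrite Hsum. replace ((1 - q ^ S n) / (1 - q) - / (1 - q))%C with (- q ^ S n / (1 - q))%C
    by (field; exact H1q).
  unfold Cdiv. rewrite Cmod_mult, Cmod_opp, Cmod_pow, Cmod_inv by exact H1q.
  specialize (HN (S n) ltac:(lia)). simpl pos in HN.
  rewrite Rminus_0_r, Rabs_pos_eq in HN by (apply pow_le, Cmod_ge_0).
  apply (Rmult_lt_reg_r (Cmod (1 - q))); [exact Hm|].
  rewrite Rmult_assoc, Rinv_l, Rmult_1_r by lra. exact HN.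
Qed.

Lemma exp_pow_nat x (m : nat) : exp x ^ m = exp (INR m * x).
Proof. rewrite <- Rpower_pow by apply exp_pos. unfold Rpower. rewrite ln_exp. reflexivity. Qed.

Lemma cpow_inv_pow (P : R) (n : nat) (s : C) : 0 < P ->
  cpow (/ P ^ n) s = (cexp (- RtoC (ln P) * s) ^ n)%C.
Proof.
  intros HP. rewrite <- cexp_mul_nat.
  assert (Hln : ln (/ P ^ n) = - INR n * ln P)
    by (rewrite ln_Rinv, ln_pow by (auto using pow_lt); ring).
  unfold cpow, cexp, Re, Im. rewrite Hln.
  apply injective_projections; simpl; f_equal; f_equal; ring.
Qed.

Lemma RtoC_pow_cexp (P : R) (n : nat) : 0 < P -> RtoC (P ^ n) = (cexp (RtoC (ln P)) ^ n)%C.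
Proof.
  intros HP. rewrite RtoC_pow. f_equal.
  unfold cexp, Re, Im, RtoC; simpl. rewrite exp_ln, cos_0, sin_0 by exact HP. f_equal; ring.
Qed.

Lemma zeta_ratio_split L s :
  zeta_ratio L s = (cexp (RtoC L) * (cexp (- RtoC L * s) * cexp (- RtoC L * s)))%C.
Proof. unfold zeta_ratio. rewrite <- !cexp_add. f_equal. ring. Qed.

Lemma zeta_term_even (p : Z) (N : nat -> nat) (s : C) (k : nat) : 0 < IZR p ->
  INR (N (2 * k + 2)%nat) = (IZR p - 1) * IZR p ^ (k + 1) ->
  zeta_term p N s (2 * k + 2) = (RtoC (IZR p - 1) * zeta_ratio (ln (IZR p)) s ^ S k)%C.
Proof.
  intros HP HN. unfold zeta_term. rewrite HN, cpow_inv_pow, RtoC_mult, RtoC_pow_cexp by exact HP.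
  replace (2 * k + 2)%nat with (2 * S k)%nat by lia. replace (k + 1)%nat with (S k) by lia.
  rewrite Cpow_mult_r, <- Cmult_assoc, <- Cpow_mult_l, zeta_ratio_split.
  do 3 f_equal. simpl. ring.
Qed.

Section GeometricProfile.

Variables (p : Z) (N : nat -> nat).
Hypothesis Hp : 1 < IZR p.
Hypothesis HN0 : N 0%nat = 0%nat.
Hypothesis HNodd : forall k, N (2 * k + 1)%nat = 0%nat.
Hypothesis HNeven : forall k, INR (N (2 * k + 2)%nat) = (IZR p - 1) * IZR p ^ (k + 1).

Lemma geometric_profile_real_term sigma k :
  INR (N (2 * k + 2)%nat) * Rpower (/ IZR p ^ (2 * k + 2)) sigma
  = (IZR p - 1) * exp ((1 - 2 * sigma) * ln (IZR p)) ^ S k.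
Proof.
  rewrite HNeven. unfold Rpower.
  rewrite ln_Rinv, ln_pow by (try apply pow_lt; lra).
  rewrite <- (exp_ln (IZR p)) at 2 by lra.
  rewrite !exp_pow_nat, Rmult_assoc, <- exp_plus. do 2 f_equal.
  rewrite S_INR, !plus_INR, mult_INR. cbn [INR]. ring.
Qed.

Lemma geometric_profile_abscissa : abscissa_of_convergence p N (1 / 2).
Proof.
  intros sigma. set (rho := exp ((1 - 2 * sigma) * ln (IZR p))).
  assert (HL : 0 < ln (IZR p)) by (rewrite <- ln_1; apply ln_increasing; lra).
  split.
  - intros Hs.
    assert (Hrho : 0 < rho < 1).
    { split; [apply exp_pos|]. rewrite <- exp_0. apply exp_increasing. nra. }
    exists (scal ((IZR p - 1) * rho) (/ (1 - rho))).
    apply (is_series_interleave_zeros _ (fun k => (IZR p - 1) * rho ^ S k)).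
    + rewrite HN0. simpl. apply Rmult_0_l.
    + intros k. rewrite HNodd. simpl. apply Rmult_0_l.
    + intros k. apply geometric_profile_real_term.
    + apply (is_series_ext (V := R_NormedModule) (fun k => scal ((IZR p - 1) * rho) (rho ^ k))).
      { intros k. simpl. rewrite Rmult_assoc. reflexivity. }
      apply (is_series_scal_l (K := R_AbsRing) (V := R_NormedModule)), is_series_geom.
      rewrite Rabs_pos_eq; lra.
  - intros Hs Hex. apply ex_series_lim_0, is_lim_seq_spec in Hex.
    assert (Hrho : 1 <= rho) by (rewrite <- exp_0; left; apply exp_increasing; nra).
    destruct (Hex (mkposreal (IZR p - 1) ltac:(lra))) as [M HM].
    assert (Hrho_pow : 1 <= rho ^ S M) by (apply pow_R1_Rle; exact Hrho).
    specialize (HM (2 * M + 2)%nat ltac:(lia)). simpl pos in HM.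
    rewrite geometric_profile_real_term, Rminus_0_r in HM. fold rho in HM.
    rewrite Rabs_pos_eq in HM by (apply Rmult_le_pos; lra).
    nra.
Qed.

Lemma geometric_profile_complex_dimensions :
  complex_dimensions_are p N (1 / 2) (critical_lattice (ln (IZR p))).
Proof.
  assert (HL : 0 < ln (IZR p)) by (rewrite <- ln_1; apply ln_increasing; lra).
  exists (zeta_closed (IZR p)). split; [|split; [|split]].
  - intros s Hs. set (W := zeta_ratio (ln (IZR p)) s).
    assert (HW : Cmod W < 1).
    { unfold W. rewrite Cmod_zeta_ratio. rewrite <- exp_0 at 2.
      apply exp_increasing. unfold Re. nra. }
    assert (H1W : (1 - W)%C <> 0%C)
      by (apply Cone_minus_neq_0; intros HW1; rewrite HW1, Cmod_1 in HW; lra).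
    apply (is_series_interleave_zeros _ (fun k => RtoC (IZR p - 1) * W ^ S k)%C).
    + unfold zeta_term. rewrite HN0. simpl INR. apply Cmult_0_l.
    + intros k. unfold zeta_term. rewrite HNodd. simpl INR. apply Cmult_0_l.
    + intros k. apply zeta_term_even; [lra | apply HNeven].
    + replace (zeta_closed (IZR p) s) with (RtoC (IZR p - 1) * W * / (1 - W))%C
        by (unfold zeta_closed; fold W; field; exact H1W).
      apply (is_series_ext (K := C_AbsRing) (V := C_NormedModule)
               (fun k => scal (RtoC (IZR p - 1) * W) (W ^ k))%C).
      { intros k. simpl. rewrite Cmult_assoc. reflexivity. }
      apply (is_series_scal_l (K := C_AbsRing) (V := C_NormedModule)), is_series_Cgeom, HW.
  - apply discrete_of_separated with (PI / ln (IZR p)).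
    + apply Rdiv_lt_0_compat; [apply PI_RGT_0 | exact HL].
    + intros w1 w2. apply critical_lattice_separated, HL.
  - intros z Hz. apply ex_derive_zeta_closed. rewrite zeta_ratio_eq_1 by exact HL. exact Hz.
  - intros z0 Hz0. apply zeta_closed_pole; [lra | exact Hz0].
Qed.

End GeometricProfile.

Lemma string_mult_zero_odd_digits_even_INR p k : (0 < p)%Z ->
  INR (string_mult p (complement_in_Zp p (zero_odd_digits p)) (2 * k + 2)) =
  (IZR p - 1) * IZR p ^ (k + 1).
Proof.
  intros Hp. rewrite string_mult_zero_odd_digits_even, mult_INR, pow_INR, minus_INR by lia.
  rewrite INR_IZR_INZ, Z2Nat.id by lia. simpl INR. ring.
Qed.

Theorem theorem3p1 :
  forall p : Z, prime p ->
  exists (m : nat) (cs : list Z) (K : (nat -> Z) -> Prop),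
    (1 <= m)%nat /\ (2 <= length cs)%nat /\ NoDup cs /\
    ss_attractor p m cs K /\
    abscissa_of_convergence p (string_mult p (complement_in_Zp p K)) (1 / 2) /\
    complex_dimensions_are p (string_mult p (complement_in_Zp p K)) (1 / 2)
      (fun s : C => exists n : Z, s = (1 / 2, IZR n * (PI / ln (IZR p)))).
Proof.
  intros p Hprime. assert (Hp := prime_ge_2 p Hprime).
  exists 2%nat, (digits p), (zero_odd_digits p).
  split; [lia|]. split; [rewrite digits_length; lia|]. split; [apply digits_NoDup|].
  split; [apply zero_odd_digits_attractor; lia|].
  set (N := string_mult p (complement_in_Zp p (zero_odd_digits p))).
  assert (HP : 1 < IZR p) by (apply IZR_lt; lia).
  assert (HN0 : N 0%nat = 0%nat) by apply string_mult_zero_odd_digits_0.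
  assert (HNodd : forall k, N (2 * k + 1)%nat = 0%nat)
    by (intros k; apply string_mult_zero_odd_digits_odd; lia).
  assert (HNeven : forall k, INR (N (2 * k + 2)%nat) = (IZR p - 1) * IZR p ^ (k + 1))
    by (intros k; apply string_mult_zero_odd_digits_even_INR; lia).
  split.
  - apply geometric_profile_abscissa; assumption.
  - apply geometric_profile_complex_dimensions; assumption.
Qed.
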